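(* Let $x,y$ be allocation rules of $n$-agent rank-based auctions, with $b$ the equilibrium bid function of the all-pay auction with rule $x$. If $\delta_N\le 1/n$, then $Z_y(\delta_N)\,b(\delta_N)\le e\,\delta_N\,y'(\delta_N)$.
   Context: Agents have values i.i.d. from a continuous distribution $F$ on $[0,1]$; quantile $q=F(v)$, $v(q)=F^{-1}(q)$. For $k\in\{1,\dots,n-1\}$ the $k$-highest-bids-win allocation rule is $x_k(q)=\sum_{i=0}^{k-1}\binom{n-1}{i}q^{n-1-i}(1-q)^i$; $x_0\equiv0$, $x_n\equiv1$. A rank-based auction with position weights $1\ge w_1\ge\cdots\ge w_n\ge 0$ ($w_{n+1}:=0$) has allocation rule $\sum_{k=1}^{n}(w_k-w_{k+1})x_k(q)$. The all-pay Bayes–Nash equilibrium bid function for rule $x$ satisfies $b(0)=0$, $b'(q)=v(q)x'(q)$. $Z_y(q)=(1-q)\,y'(q)/x'(q)$. $\delta_N=\max(25\log\log N,n)/N$. *)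

From Stdlib Require Import Reals Lra Lia.
Open Scope R_scope.

(* k-highest-bids-win allocation rule for n agents:
   x_k(q) = sum_{i=0}^{k-1} C(n-1,i) q^(n-1-i) (1-q)^i  for 1 <= k <= n-1,
   x_0 = 0, x_n = 1. *)
Definition xk (n k : nat) (q : R) : R :=
  if (k =? 0)%nat then 0
  else if (n <=? k)%nat then 1
  else sum_f_R0 (fun i => C (n - 1) i * q ^ (n - 1 - i) * (1 - q) ^ i) (k - 1).

Definition wext (n : nat) (w : nat -> R) (k : nat) : R :=
  if (k <=? n)%nat then w k else 0.

Definition valid_weights (n : nat) (w : nat -> R) : Prop :=
  w 1%nat <= 1 /\
  (forall k, (1 <= k)%nat -> (k < n)%nat -> w (S k) <= w k) /\
  0 <= w n.

Definition rank_alloc (n : nat) (w : nat -> R) (q : R) : R :=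
  sum_f_R0 (fun j => (wext n w (S j) - wext n w (S (S j))) * xk n (S j) q) (n - 1).

Definition is_rank_alloc (n : nat) (x : R -> R) : Prop :=
  exists w : nat -> R, valid_weights n w /\ forall q, x q = rank_alloc n w q.

Definition is_cont_cdf01 (F : R -> R) : Prop :=
  (forall t, continuity_pt F t) /\
  (forall s t, s <= t -> F s <= F t) /\
  F 0 = 0 /\ F 1 = 1.

Definition is_quantile (F v : R -> R) : Prop :=
  forall q, 0 <= q <= 1 ->
    0 <= v q <= 1 /\ q <= F (v q) /\
    (forall t, 0 <= t <= 1 -> q <= F t -> v q <= t).

Definition Zy (x' y' : R -> R) (q : R) : R := (1 - q) * y' q / x' q.

Definition deltaN (n N : nat) : R := Rmax (25 * ln (ln (INR N))) (INR n) / INR N.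

(* On [0, d] each x_k' is at most e x_k'(d): the factor q^(n-1-k) grows with q,
   the factor (1-q)^(k-1) is at most 1, and (1-d)^(k-1) >= 1/e because
   d <= 1/n <= 1/k.  Rank-based rules are nonnegative combinations of the x_k,
   so x'(r) <= e x'(d) on [0, d], whence b(d) = int_0^d v x' <= e d x'(d)
   because 0 <= v <= 1.  Multiplying by Z_y(d) = (1-d) y'(d) / x'(d) gives the
   claim (and if x'(d) = 0, then Z_y(d) = 0 since Rocq's division gives 0). *)

From Stdlib Require Import Reals Lra Lia.
Open Scope R_scope.

Lemma derivable_pt_lim_pow_mul_pow1m (a b : nat) (q : R) :
  derivable_pt_lim (fun t => t ^ a * (1 - t) ^ b) q
    (INR a * q ^ pred a * (1 - q) ^ b - INR b * q ^ a * (1 - q) ^ pred b).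
Proof.
  assert (D1m : derivable_pt_lim (fun t => (1 - t) ^ b) q (INR b * (1 - q) ^ pred b * (0 - 1))).
  { apply (derivable_pt_lim_comp (fun t => 1 - t) (fun s => s ^ b)).
    - apply derivable_pt_lim_minus; [apply derivable_pt_lim_const | apply derivable_pt_lim_id].
    - apply derivable_pt_lim_pow. }
  replace (INR a * q ^ pred a * (1 - q) ^ b - INR b * q ^ a * (1 - q) ^ pred b)
    with (INR a * q ^ pred a * (1 - q) ^ b + q ^ a * (INR b * (1 - q) ^ pred b * (0 - 1)))
    by ring.
  apply (derivable_pt_lim_mult (fun t => t ^ a) (fun t => (1 - t) ^ b));
    [apply derivable_pt_lim_pow | exact D1m].
Qed.

Lemma derivable_pt_lim_sum_f_R0 (f : nat -> R -> R) (df : nat -> R) (q : R) (m : nat) :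
  (forall i, (i <= m)%nat -> derivable_pt_lim (f i) q (df i)) ->
  derivable_pt_lim (fun t => sum_f_R0 (fun i => f i t) m) q (sum_f_R0 df m).
Proof.
  induction m as [|m IH]; intros Df; simpl.
  - apply Df; lia.
  - apply (derivable_pt_lim_plus (fun t => sum_f_R0 (fun i => f i t) m) (f (S m))).
    + apply IH; intros i Hi; apply Df; lia.
    + apply Df; lia.
Qed.

(* The sum telescopes: Pascal's [C m (j+1) (j+1) = C m j (m-j)] cancels the
   negative part of each new term against the previous derivative. *)
Lemma derivable_pt_lim_binomial_partial_sum (m j : nat) (q : R) : (j < m)%nat ->
  derivable_pt_lim (fun t => sum_f_R0 (fun i => C m i * t ^ (m - i) * (1 - t) ^ i) j) q
    (INR (m - j) * C m j * q ^ (m - S j) * (1 - q) ^ j).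
Proof.
  induction j as [|j IH]; intros Hjm.
  - apply derivable_pt_lim_ext with (fun t => C m 0 * (t ^ (m - 0) * (1 - t) ^ 0)).
    { intros t; simpl; ring. }
    replace (INR (m - 0) * C m 0 * q ^ (m - 1) * (1 - q) ^ 0)
      with (C m 0 * (INR (m - 0) * q ^ pred (m - 0) * (1 - q) ^ 0
                     - INR 0 * q ^ (m - 0) * (1 - q) ^ pred 0))
      by (replace (pred (m - 0)) with (m - 1)%nat by lia; simpl; ring).
    apply derivable_pt_lim_scal, derivable_pt_lim_pow_mul_pow1m.
  - assert (Pascal : C m (S j) * INR (S j) = INR (m - j) * C m j).
    { rewrite pascal_step3 by lia. field. apply not_0_INR; lia. }
    apply derivable_pt_lim_ext
      with (fun t => sum_f_R0 (fun i => C m i * t ^ (m - i) * (1 - t) ^ i) j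
                     + C m (S j) * (t ^ (m - S j) * (1 - t) ^ S j)).
    { intros t; simpl; ring. }
    replace (INR (m - S j) * C m (S j) * q ^ (m - S (S j)) * (1 - q) ^ S j)
      with (INR (m - j) * C m j * q ^ (m - S j) * (1 - q) ^ j
            + C m (S j) * (INR (m - S j) * q ^ pred (m - S j) * (1 - q) ^ S j
                           - INR (S j) * q ^ (m - S j) * (1 - q) ^ pred (S j))).
    2:{ replace (pred (m - S j)) with (m - S (S j))%nat by lia. simpl pred.
        replace (C m (S j) * (INR (m - S j) * q ^ (m - S (S j)) * (1 - q) ^ S j
                   - INR (S j) * q ^ (m - S j) * (1 - q) ^ j))
          with (INR (m - S j) * C m (S j) * q ^ (m - S (S j)) * (1 - q) ^ S j
                - C m (S j) * INR (S j) * q ^ (m - S j) * (1 - q) ^ j) by ring.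
        rewrite Pascal; ring. }
    apply (derivable_pt_lim_plus
             (fun t => sum_f_R0 (fun i => C m i * t ^ (m - i) * (1 - t) ^ i) j)
             (fun t => C m (S j) * (t ^ (m - S j) * (1 - t) ^ S j))).
    + apply IH; lia.
    + apply derivable_pt_lim_scal, derivable_pt_lim_pow_mul_pow1m.
Qed.

Definition xk' (n k : nat) (q : R) : R :=
  if (n <=? k)%nat then 0
  else INR (n - k) * C (n - 1) (k - 1) * q ^ (n - 1 - k) * (1 - q) ^ (k - 1).

Definition rank_alloc' (n : nat) (w : nat -> R) (q : R) : R :=
  sum_f_R0 (fun j => (wext n w (S j) - wext n w (S (S j))) * xk' n (S j) q) (n - 1).

Lemma derivable_pt_lim_xk (n k : nat) (q : R) : (1 <= k)%nat ->
  derivable_pt_lim (xk n k) q (xk' n k q).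
Proof.
  intros Hk. unfold xk'.
  destruct (n <=? k)%nat eqn:Hnk.
  - apply derivable_pt_lim_ext with (fun _ => 1).
    { intros t. unfold xk. rewrite Hnk.
      replace (k =? 0)%nat with false by (symmetry; apply Nat.eqb_neq; lia).
      reflexivity. }
    apply derivable_pt_lim_const.
  - apply Nat.leb_gt in Hnk.
    apply derivable_pt_lim_ext
      with (fun t => sum_f_R0 (fun i => C (n - 1) i * t ^ (n - 1 - i) * (1 - t) ^ i) (k - 1)).
    { intros t. unfold xk.
      replace (k =? 0)%nat with false by (symmetry; apply Nat.eqb_neq; lia).
      replace (n <=? k)%nat with false by (symmetry; apply Nat.leb_gt; lia).
      reflexivity. }
    replace (n - k)%nat with (n - 1 - (k - 1))%nat by lia.
    replace (n - 1 - k)%nat with (n - 1 - S (k - 1))%nat by lia.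
    apply derivable_pt_lim_binomial_partial_sum; lia.
Qed.

Lemma derivable_pt_lim_rank_alloc (n : nat) (w : nat -> R) (q : R) :
  derivable_pt_lim (rank_alloc n w) q (rank_alloc' n w q).
Proof.
  apply (derivable_pt_lim_sum_f_R0
           (fun j t => (wext n w (S j) - wext n w (S (S j))) * xk n (S j) t)).
  intros j _. apply derivable_pt_lim_scal, derivable_pt_lim_xk; lia.
Qed.

Lemma rank_alloc_derivative_eq (n : nat) (w : nat -> R) (x : R -> R) (q l : R) :
  (forall t, x t = rank_alloc n w t) -> derivable_pt_lim x q l ->
  l = rank_alloc' n w q.
Proof.
  intros Ex Dx. apply (uniqueness_limite x q); [exact Dx |].
  apply derivable_pt_lim_ext with (rank_alloc n w).
  - intros t; symmetry; apply Ex.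
  - apply derivable_pt_lim_rank_alloc.
Qed.

Lemma weight_gap_ge0 (n : nat) (w : nat -> R) (j : nat) :
  valid_weights n w -> (j < n)%nat -> 0 <= wext n w (S j) - wext n w (S (S j)).
Proof.
  intros [_ [Hdecr Hwn]] Hj. unfold wext.
  replace (S j <=? n)%nat with true by (symmetry; apply Nat.leb_le; lia).
  destruct (S (S j) <=? n)%nat eqn:E.
  - apply Nat.leb_le in E. pose proof (Hdecr (S j) ltac:(lia) ltac:(lia)). lra.
  - apply Nat.leb_gt in E. replace (S j) with n by lia. lra.
Qed.

Lemma C_ge0 (m i : nat) : 0 <= C m i.
Proof.
  unfold C. apply Rle_mult_inv_pos; [apply pos_INR |].
  apply Rmult_lt_0_compat; apply INR_fact_lt_0.
Qed.

Lemma pow_le1 (x : R) (k : nat) : 0 <= x <= 1 -> x ^ k <= 1.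
Proof. intros Hx. rewrite <- (pow1 k). apply pow_incr; lra. Qed.

Lemma xk'_ge0 (n k : nat) (q : R) : 0 <= q <= 1 -> 0 <= xk' n k q.
Proof.
  intros Hq. unfold xk'. destruct (n <=? k)%nat; [lra |].
  apply Rmult_le_pos; [apply Rmult_le_pos; [apply Rmult_le_pos |] |].
  - apply pos_INR.
  - apply C_ge0.
  - apply pow_le; lra.
  - apply pow_le; lra.
Qed.

Lemma rank_alloc'_ge0 (n : nat) (w : nat -> R) (q : R) :
  valid_weights n w -> 0 <= q <= 1 -> 0 <= rank_alloc' n w q.
Proof.
  intros Vw Hq. unfold rank_alloc'. apply cond_pos_sum. intros j.
  destruct (Nat.lt_ge_cases j n) as [Hj | Hj].
  - apply Rmult_le_pos; [apply weight_gap_ge0; auto | apply xk'_ge0; auto].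
  - unfold xk'. replace (n <=? S j)%nat with true by (symmetry; apply Nat.leb_le; lia). lra.
Qed.

Lemma exp_pow (x : R) (k : nat) : exp x ^ k = exp (INR k * x).
Proof.
  induction k as [|k IH]; simpl pow.
  - rewrite Rmult_0_l, exp_0; reflexivity.
  - rewrite IH, <- exp_plus, S_INR. f_equal; ring.
Qed.

(* (1 - d)^m >= (m/(m+1))^m = (1 + 1/m)^-m >= e^-1. *)
Lemma one_le_exp1_mul_pow1m (m : nat) (d : R) :
  0 <= d <= 1 / INR (S m) -> 1 <= exp 1 * (1 - d) ^ m.
Proof.
  intros Hd. destruct m as [|m'].
  { simpl. rewrite Rmult_1_r. pose proof (exp_ineq1_le 1). lra. }
  set (m := S m') in *.
  assert (Hm : 0 < INR m) by (apply lt_0_INR; unfold m; lia).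
  rewrite S_INR in Hd.
  assert (Hinv : 0 < 1 / INR m) by (apply Rdiv_lt_0_compat; lra).
  assert (Hratio : 0 <= INR m / (INR m + 1)) by (apply Rle_mult_inv_pos; lra).
  assert (Upper : (1 + 1 / INR m) ^ m <= exp 1).
  { replace (exp 1) with (exp (1 / INR m) ^ m) by (rewrite exp_pow; f_equal; field; lra).
    apply pow_incr. split; [lra | apply exp_ineq1_le]. }
  assert (Lower : (INR m / (INR m + 1)) ^ m <= (1 - d) ^ m).
  { apply pow_incr. split; [exact Hratio |].
    replace (INR m / (INR m + 1)) with (1 - 1 / (INR m + 1)) by (field; lra). lra. }
  apply Rle_trans with ((1 + 1 / INR m) ^ m * (INR m / (INR m + 1)) ^ m).
  - rewrite <- Rpow_mult_distr.
    replace ((1 + 1 / INR m) * (INR m / (INR m + 1))) with 1 by (field; lra).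
    rewrite pow1; lra.
  - apply Rmult_le_compat; try apply pow_le; lra.
Qed.

Lemma xk'_le_exp1 (n k : nat) (r d : R) : (1 <= k)%nat ->
  0 <= r <= d -> d <= 1 / INR n -> xk' n k r <= exp 1 * xk' n k d.
Proof.
  intros Hk Hr Hd. unfold xk'. destruct (n <=? k)%nat eqn:Hnk; [lra |].
  apply Nat.leb_gt in Hnk.
  assert (Hn : INR k < INR n) by (apply lt_INR; lia).
  assert (Hk0 : 0 < INR k) by (apply lt_0_INR; lia).
  assert (Hdk : d <= 1 / INR k).
  { apply Rle_trans with (1 / INR n); [exact Hd |].
    apply Rmult_le_compat_l; [lra | apply Rinv_le_contravar; lra]. }
  assert (Hd1 : d <= 1).
  { apply Rle_trans with (1 / INR k); [exact Hdk |].
    apply Rmult_le_reg_l with (INR k); [lra |].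
    assert (1 <= INR k) by (apply (le_INR 1); lia).
    field_simplify; lra. }
  assert (E : 1 <= exp 1 * (1 - d) ^ (k - 1)).
  { apply one_le_exp1_mul_pow1m. replace (S (k - 1)) with k by lia. lra. }
  set (A := INR (n - k) * C (n - 1) (k - 1)).
  assert (HA : 0 <= A) by (apply Rmult_le_pos; [apply pos_INR | apply C_ge0]).
  apply Rle_trans with (A * d ^ (n - 1 - k) * 1).
  - apply Rmult_le_compat; try apply pow_le; try lra.
    + apply Rmult_le_pos; [exact HA | apply pow_le; lra].
    + apply Rmult_le_compat_l; [exact HA | apply pow_incr; lra].
    + apply pow_le1; lra.
  - replace (exp 1 * (A * d ^ (n - 1 - k) * (1 - d) ^ (k - 1)))
      with (A * d ^ (n - 1 - k) * (exp 1 * (1 - d) ^ (k - 1))) by ring.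
    apply Rmult_le_compat_l; [apply Rmult_le_pos; [| apply pow_le] |]; lra.
Qed.

Lemma rank_alloc'_le_exp1 (n : nat) (w : nat -> R) (r d : R) : valid_weights n w ->
  0 <= r <= d -> d <= 1 / INR n -> rank_alloc' n w r <= exp 1 * rank_alloc' n w d.
Proof.
  intros Vw Hr Hd. unfold rank_alloc'. rewrite scal_sum.
  apply sum_Rle. intros j _.
  destruct (Nat.lt_ge_cases j n) as [Hjn | Hjn].
  - pose proof (weight_gap_ge0 n w j Vw Hjn) as Hgap.
    pose proof (xk'_le_exp1 n (S j) r d ltac:(lia) Hr Hd) as Hcmp.
    pose proof (Rmult_le_compat_l _ _ _ Hgap Hcmp). lra.
  - unfold xk'. replace (n <=? S j)%nat with true by (symmetry; apply Nat.leb_le; lia). lra.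
Qed.

Lemma deltaN_ge0 (n N : nat) : 0 <= deltaN n N.
Proof.
  unfold deltaN. destruct N as [|N].
  - simpl INR. rewrite Rdiv_0_r. lra.
  - apply Rle_mult_inv_pos; [| apply lt_0_INR; lia].
    apply Rle_trans with (INR n); [apply pos_INR | apply Rmax_r].
Qed.

Lemma Zy_mul_le (x' y' : R -> R) (d B : R) : 0 <= d <= 1 -> 0 <= x' d -> 0 <= y' d ->
  B <= exp 1 * x' d * d -> Zy x' y' d * B <= exp 1 * d * y' d.
Proof.
  intros Hd Hx' Hy' HB. unfold Zy.
  assert (He : 0 < exp 1) by apply exp_pos.
  assert (Hrhs : 0 <= exp 1 * d * y' d) by (apply Rmult_le_pos; [apply Rmult_le_pos |]; lra).
  destruct (Req_dec (x' d) 0) as [Hzero | Hnz].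
  { rewrite Hzero, Rdiv_0_r, !Rmult_0_l. exact Hrhs. }
  apply Rle_trans with ((1 - d) * y' d / x' d * (exp 1 * x' d * d)).
  - apply Rmult_le_compat_l; [apply Rle_mult_inv_pos; [apply Rmult_le_pos |] |]; lra.
  - replace ((1 - d) * y' d / x' d * (exp 1 * x' d * d))
      with (exp 1 * d * y' d - d * (exp 1 * d * y' d)) by (field; exact Hnz).
    nra.
Qed.

Theorem mainTheorem11 (n N : nat) (F v x y x' y' b : R -> R) :
  (1 <= n)%nat ->
  is_cont_cdf01 F ->
  is_quantile F v ->
  is_rank_alloc n x ->
  is_rank_alloc n y ->
  (forall q, derivable_pt_lim x q (x' q)) ->
  (forall q, derivable_pt_lim y q (y' q)) ->
  (forall q, 0 <= q <= 1 ->
     exists pr : Riemann_integrable (fun r => v r * x' r) 0 q, b q = RiemannInt pr) ->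
  deltaN n N <= 1 / INR n ->
  Zy x' y' (deltaN n N) * b (deltaN n N) <= exp 1 * deltaN n N * y' (deltaN n N).
Proof.
  intros Hn _ Hv [wx [Vx Ex]] [wy [Vy Ey]] Dx Dy Hb Hd.
  assert (X' : forall q, x' q = rank_alloc' n wx q)
    by (intros q; exact (rank_alloc_derivative_eq n wx x q _ Ex (Dx q))).
  assert (Y' : forall q, y' q = rank_alloc' n wy q)
    by (intros q; exact (rank_alloc_derivative_eq n wy y q _ Ey (Dy q))).
  set (d := deltaN n N) in *.
  assert (Hd0 : 0 <= d) by apply deltaN_ge0.
  assert (Hd1 : d <= 1).
  { apply Rle_trans with (1 / INR n); [exact Hd |].
    assert (1 <= INR n) by (apply (le_INR 1); lia).
    unfold Rdiv; rewrite Rmult_1_l, <- Rinv_1; apply Rinv_le_contravar; lra. }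
  apply Zy_mul_le; [lra | rewrite X'; apply rank_alloc'_ge0; auto
                        | rewrite Y'; apply rank_alloc'_ge0; auto |].
  destruct (Hb d ltac:(lra)) as [pr ->].
  replace (exp 1 * x' d * d) with (exp 1 * x' d * (d - 0)) by ring.
  apply (RiemannInt_const_bound (l := 0) pr Hd0). intros r Hr.
  destruct (Hv r ltac:(lra)) as [Hvr _].
  assert (0 <= x' r) by (rewrite X'; apply rank_alloc'_ge0; auto; lra).
  assert (x' r <= exp 1 * x' d) by (rewrite !X'; apply rank_alloc'_le_exp1; auto; lra).
  split; nra.
Qed.
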